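(* Proper interval graphs $\subsetneq$ exactly hittable interval graphs $\subsetneq$ interval graphs (both containments are strict).
   Context: An interval graph is the intersection graph of a finite family of intervals on a line. A proper interval graph is an interval graph having an interval representation in which no interval properly contains another. An interval hypergraph has vertex set $[n]$ and hyperedges that are nonempty sets of consecutive integers; it is exactly hittable if there is a set $T$ of points with $|T\cap I|=1$ for every hyperedge $I$. An exactly hittable interval graph is an interval graph that is the intersection graph of an exactly hittable interval hypergraph. *)

From mathcomp Require Import all_boot all_order all_algebra.
Set Implicit Arguments. Unset Strict Implicit. Unset Printing Implicit Defensive.
Import Order.TTheory GRing.Theory Num.Theory.
Local Open Scope ring_scope.

Definition simple_graph (V : finType) (e : rel V) : Prop :=
  symmetric e /\ irreflexive e.

Definition in_interval (l r : rat) (p : rat) : bool := (l <= p) && (p <= r).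

Definition interval_model (V : finType) (e : rel V) (l r : V -> rat) : Prop :=
  (forall v, l v <= r v) /\
  (forall x y, x != y ->
     (e x y <-> exists p, in_interval (l x) (r x) p && in_interval (l y) (r y) p)).

Definition interval_graph (V : finType) (e : rel V) : Prop :=
  exists l r : V -> rat, interval_model e l r.

Definition proper_family (V : finType) (l r : V -> rat) : Prop :=
  forall x y : V,
    ~ ((forall p, in_interval (l y) (r y) p -> in_interval (l x) (r x) p) /\
       (exists p, in_interval (l x) (r x) p && ~~ in_interval (l y) (r y) p)).

Definition proper_interval_graph (V : finType) (e : rel V) : Prop :=
  exists l r : V -> rat, interval_model e l r /\ proper_family l r.

(* Exactly hittable interval graph: (V, e) is the intersection graph of an
   interval hypergraph on [n] = {1..n} (hyperedges v |-> {l v, ..., r v},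
   nonempty sets of consecutive integers, indexed by the vertices of the graph)
   admitting a set T of points hitting every hyperedge exactly once. *)
Definition exactly_hittable_interval_graph (V : finType) (e : rel V) : Prop :=
  exists (n : nat) (l r : V -> nat) (T : pred nat),
    (forall v, (1 <= l v)%N && (l v <= r v)%N && (r v <= n)%N) /\
    (forall v, count (fun p => T p && (l v <= p <= r v)%N) (iota 1 n) = 1%N) /\
    (forall x y, x != y ->
       (e x y <-> exists p : nat, [&& (l x <= p <= r x)%N & (l y <= p <= r y)%N])).

From mathcomp Require Import all_boot all_order all_algebra.
From mathcomp Require Import zify.
From mathcomp.algebra_tactics Require Import lra.
Import Order.TTheory GRing.Theory Num.Theory.
Set Implicit Arguments. Unset Strict Implicit. Unset Printing Implicit Defensive.
Local Open Scope ring_scope.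

(* A proper family of intervals is hit exactly once by the greedy choice of
   right endpoints: take the smallest right endpoint [r w], drop the intervals
   containing it and recurse.  An interval [v] containing [r w] meets no later
   point [r y], because [l v < l y] forces [r v < r y] in a proper family.
   Replacing every endpoint by its rank among all endpoints turns this into an
   exactly hittable model on [1..n].  An exactly hittable model is an interval
   model with integer endpoints.
   The claw K_{1,3} is exactly hittable but not proper: of three disjoint
   neighbours of the centre, the middle one lies strictly inside the centre.
   The star K_{1,4} is an interval graph but not exactly hittable: of pairwise
   disjoint neighbours of a vertex at most one lies within it (two would share
   its unique hit point), and the others stick out on pairwise different
   sides, so there are at most three. *)

Lemma count_uniq_eq1 (T : eqType) (a : pred T) (s : seq T) : uniq s ->
  count a s = 1%N <-> exists2 x, x \in s & {in s, a =1 pred1 x}.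
Proof.
move=> s_uniq; split=> [| [x xs ax]]; last first.
  by rewrite (eq_in_count ax) count_uniq_mem ?xs.
rewrite -size_filter; case def_as: (filter a s) => [|x [|]] // _.
have xs : x \in filter a s by rewrite def_as mem_head.
exists x; first by rewrite mem_filter in xs; case/andP: xs.
by move=> y ys /=; rewrite -mem_seq1 -def_as mem_filter ys andbT.
Qed.

Section Intervals.

Variables (disp : Order.disp_t) (T : porderType disp) (V : Type) (l r : V -> T).

Definition meets (x y : V) : bool := ((l x <= r y) && (l y <= r x))%O.

Definition within (x y : V) : bool := ((l y <= l x) && (r x <= r y))%O.

End Intervals.

Lemma rat_intervals_meetE (V : Type) (l r : V -> rat) x y :
  l x <= r x -> l y <= r y ->
  (exists p, in_interval (l x) (r x) p && in_interval (l y) (r y) p) <-> meets l r x y.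
Proof.
rewrite /meets /in_interval => lx ly; split.
  by case=> p /andP[/andP[? ?] /andP[? ?]]; apply/andP; split; lra.
case/andP=> lxy lyx; exists (Num.max (l x) (l y)).
by rewrite !ge_max !le_max !lexx lx ly lxy lyx !orbT.
Qed.

Lemma nat_intervals_meetE (V : Type) (l r : V -> nat) x y :
  (l x <= r x)%N -> (l y <= r y)%N ->
  (exists p, [&& l x <= p <= r x & l y <= p <= r y]%N) <-> meets l r x y.
Proof.
by rewrite /meets => ? ?; split=> [[p] | ?]; [lia | exists (maxn (l x) (l y)); lia].
Qed.

Lemma interval_model_meets (V : finType) (e : rel V) l r x y :
  interval_model e l r -> x != y -> e x y = meets l r x y.
Proof.
move=> [l_le_r e_meets] xy; apply/idP/idP => [/(e_meets x y xy) | ].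
  by rewrite rat_intervals_meetE ?l_le_r.
by rewrite -rat_intervals_meetE ?l_le_r // => /(e_meets x y xy).
Qed.

Lemma leq_index_sorted (disp : Order.disp_t) (T : orderType disp) (s : seq T) :
  sorted <%O s -> {in s &, forall x y, (index x s <= index y s)%N = (x <= y)%O}.
Proof.
move=> s_sorted x y xs ys.
case: (ltngtP (index x s) (index y s)) => [ixy | iyx | /(index_inj x xs ys) ->].
- by rewrite (ltW (sorted_ltn_index lt_trans s_sorted _ _ xs ys ixy)).
- by rewrite lt_geF // (sorted_ltn_index lt_trans s_sorted _ _ ys xs iyx).
- by rewrite lexx.
Qed.

Section Rank.

Variables (disp : Order.disp_t) (T : orderType disp) (s : seq T).

Definition rank (x : T) : nat := (index x s).+1.

Lemma rank_le_size x : x \in s -> (rank x <= size s)%N.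
Proof. by rewrite /rank index_mem. Qed.

Lemma rank_mem_iota x : x \in s -> rank x \in iota 1 (size s).
Proof. by move=> xs; rewrite mem_iota add1n ltnS rank_le_size. Qed.

Lemma leq_rank :
  sorted <%O s -> {in s &, forall x y, (rank x <= rank y)%N = (x <= y)%O}.
Proof. exact: leq_index_sorted. Qed.

End Rank.

Section ProperFamily.

Variables (V : finType) (l r : V -> rat).
Hypotheses (l_le_r : forall v, l v <= r v) (l_r_proper : proper_family l r).

Lemma proper_family_ltr x y : l x < l y -> r x < r y.
Proof.
move=> lxy; rewrite ltNge; apply/negP=> ryx; apply: (@l_r_proper x y); split.
  by move=> p /andP[? ?]; rewrite /in_interval; apply/andP; split; lra.
by exists (l x); rewrite /in_interval lexx l_le_r /= leNgt lxy.
Qed.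

Lemma proper_family_claw_free c a b d :
  ~~ [&& meets l r c a, meets l r c b, meets l r c d,
         ~~ meets l r a b, ~~ meets l r a d & ~~ meets l r b d].
Proof.
move: (@proper_family_ltr c a) (@proper_family_ltr c b) (@proper_family_ltr c d).
by move: (l_le_r a) (l_le_r b) (l_le_r d); rewrite /meets; lra.
Qed.

Lemma proper_family_exact_hitting (A : {set V}) :
  exists hits : seq rat,
  [/\ {subset hits <= [seq r y | y in A]},
      {in A, forall v, exists2 t, t \in hits & in_interval (l v) (r v) t} &
      {in A, forall v, {in hits &, forall t t',
         in_interval (l v) (r v) t -> in_interval (l v) (r v) t' -> t = t'}}].
Proof.
have [n] := ubnP #|A|; elim: n A => // n IH A.
have [-> _ | [w0 w0A] ltAn] := set_0Vmem A.
  by exists [::]; split=> // v; rewrite in_set0.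
have [w wA w_min] := arg_minP r w0A.
pose A' := [set v in A | r w < l v].
have [|hits' [hits'_r hits'_exist hits'_uniq]] := IH A'.
  suff : (#|A'| < #|A|)%N by lia.
  apply: proper_card; apply/properP; split.
    by apply/subsetP=> v; rewrite inE => /andP[].
  by exists w; rewrite // inE negb_and -leNgt l_le_r orbT.
have out_hits' v t : l v <= r w -> t \in hits' -> in_interval (l v) (r v) t = false.
  move=> lvw /hits'_r/imageP[y]; rewrite inE => /andP[_ wy] ->.
  by rewrite /in_interval [r y <= _]leNgt proper_family_ltr ?andbF //; lra.
exists (r w :: hits'); split.
- move=> t; rewrite inE => /predU1P[-> | /hits'_r/imageP[y]]; first exact: image_f.
  by rewrite inE => /andP[yA _] ->; apply: image_f.
- move=> v vA; case: (ltrP (r w) (l v)) => [wv | vw].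
    have [|t t_hits' vt] := hits'_exist v; first by rewrite inE vA wv.
    by exists t; rewrite // inE t_hits' orbT.
  by exists (r w); rewrite ?mem_head // /in_interval vw w_min.
- move=> v vA t t'; rewrite !inE.
  case: (ltrP (r w) (l v)) => [wv | vw].
    have out_rw : in_interval (l v) (r v) (r w) = false.
      by rewrite /in_interval leNgt wv.
    move=> /predU1P[-> | t_h] /predU1P[-> | t'_h]; rewrite ?out_rw //.
    by apply: hits'_uniq; rewrite // inE vA wv.
  by move=> /predU1P[-> | /(out_hits' v _ vw) ->]
            /predU1P[-> | /(out_hits' v _ vw) ->].
Qed.

End ProperFamily.

Lemma proper_exactly_hittable (V : finType) (e : rel V) :
  proper_interval_graph e -> exactly_hittable_interval_graph e.
Proof.
case=> l [r [[l_le_r e_meets] l_r_proper]].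
have [hits [hits_r hits_exist hits_uniq]] :=
  proper_family_exact_hitting l_le_r l_r_proper [set: V].
pose U := sort <=%O (undup (codom l ++ codom r)).
have U_sorted : sorted <%O U by rewrite sort_lt_sorted undup_uniq.
have lU v : l v \in U by rewrite mem_sort mem_undup mem_cat codom_f.
have rU v : r v \in U by rewrite mem_sort mem_undup mem_cat codom_f orbT.
have hitsU t : t \in hits -> t \in U by move/hits_r/imageP=> [y _ ->].
exists (size U), (rank U \o l), (rank U \o r), (fun p => p \in map (rank U) hits).
split; [|split].
- by move=> v /=; rewrite leq_rank ?l_le_r ?rank_le_size.
- move=> v; apply/count_uniq_eq1; first exact: iota_uniq.
  have [t t_hits vt] := hits_exist v (in_setT v).
  exists (rank U t); first exact: rank_mem_iota (hitsU t t_hits).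
  move=> p _ /=; apply/andP/eqP => [[/mapP[t' t'_hits ->] vt'] | ->].
    rewrite !leq_rank ?lU ?rU ?hitsU // in vt'.
    by rewrite (hits_uniq v _ t' t) ?in_setT.
  by rewrite map_f // !leq_rank ?lU ?rU ?hitsU.
- move=> x y xy; rewrite (interval_model_meets (conj l_le_r e_meets) xy).
  by rewrite nat_intervals_meetE /meets /= ?leEnat ?leq_rank ?l_le_r.
Qed.

Section ExactHitting.

Variables (V : finType) (n : nat) (l r : V -> nat) (T : pred nat).
Hypothesis hit_once :
  forall v, count (fun p => T p && (l v <= p <= r v)%N) (iota 1 n) = 1%N.

Lemma exact_hitting_within_meets a b c :
  within l r a c -> within l r b c -> meets l r a b.
Proof.
have hit v : exists2 t, t \in iota 1 n & T t && (l v <= t <= r v)%N.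
  by apply/hasP; rewrite has_count hit_once.
have [t_a t_a_n /andP[T_a a_t_a]] := hit a.
have [t_b t_b_n /andP[T_b b_t_b]] := hit b.
have [t_c _ c_hits] := (count_uniq_eq1 _ (iota_uniq 1 n)).1 (hit_once c).
rewrite /within /meets => /andP[ca ac] /andP[cb bc].
by move: (c_hits t_a t_a_n) (c_hits t_b t_b_n); rewrite /= T_a T_b; lia.
Qed.

Hypothesis l_le_r : forall v, (l v <= r v)%N.

Lemma exact_hitting_independent_neighbours_le3 (c : V) (L : {set V}) :
  {in L, forall a, meets l r c a} ->
  {in L &, forall a b, a != b -> ~~ meets l r a b} -> (#|L| <= 3)%N.
Proof.
move=> L_c L_disj.
have meets_eq a b : a \in L -> b \in L -> meets l r a b -> a = b.
  by move=> aL bL; apply: contraTeq; exact: L_disj.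
have inside_le1 : (#|L :&: [set a | within l r a c]| <= 1)%N.
  apply/card_le1_eqP=> b a; rewrite !inE => /andP[bL bc] /andP[aL ac].
  exact: meets_eq aL bL (exact_hitting_within_meets ac bc).
have outside_le2 : (#|L :\: [set a | within l r a c]| <= 2)%N.
  rewrite -card_bool; apply: (leq_card_in (fun a => l a < l c)%N).
  move=> a b; rewrite !inE => /andP[ac aL] /andP[bc bL] side; apply: meets_eq => //.
  move: (L_c a aL) (L_c b bL) ac bc side (l_le_r a) (l_le_r b).
  rewrite /meets /within; lia.
by rewrite -(cardsID [set a | within l r a c]) (leq_add inside_le1 outside_le2).
Qed.

End ExactHitting.

Lemma nat_model_interval_graph (V : finType) (e : rel V) (l r : V -> nat) :
  (forall v, l v <= r v)%N ->
  (forall x y, x != y ->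
     (e x y <-> exists p, [&& l x <= p <= r x & l y <= p <= r y]%N)) ->
  interval_graph e.
Proof.
move=> l_le_r e_meets; pose lq v : rat := (l v)%:R; pose rq v : rat := (r v)%:R.
exists lq, rq; split=> [v | x y xy]; first by rewrite ler_nat.
rewrite e_meets // nat_intervals_meetE // rat_intervals_meetE ?ler_nat //.
by rewrite /meets !ler_nat.
Qed.

Lemma exactly_hittable_interval (V : finType) (e : rel V) :
  exactly_hittable_interval_graph e -> interval_graph e.
Proof.
case=> n [l [r [T [bounds [_ e_meets]]]]]; apply: nat_model_interval_graph e_meets.
by move=> v; case/andP: (bounds v) => /andP[].
Qed.

Definition interval_rel (V : finType) (l r : V -> nat) : rel V :=
  fun x y => (x != y) && meets l r x y.

Lemma interval_rel_simple (V : finType) (l r : V -> nat) :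
  simple_graph (interval_rel l r).
Proof.
split=> [x y | x]; last by rewrite /interval_rel eqxx.
by rewrite /interval_rel /meets eq_sym; congr (_ && _); apply: andbC.
Qed.

Lemma interval_rel_meets (V : finType) (l r : V -> nat) :
  (forall v, l v <= r v)%N -> forall x y, x != y ->
  (interval_rel l r x y <-> exists p, [&& l x <= p <= r x & l y <= p <= r y]%N).
Proof. by move=> l_le_r x y xy; rewrite /interval_rel xy nat_intervals_meetE. Qed.

Definition K13_left (v : 'I_4) : nat := nth 0 [:: 2; 1; 3; 4]%N v.
Definition K13_right (v : 'I_4) : nat := nth 0 [:: 4; 2; 3; 5]%N v.
Definition K13 : rel 'I_4 := interval_rel K13_left K13_right.

Lemma K13_exactly_hittable : exactly_hittable_interval_graph K13.
Proof.
have K13_le v : (K13_left v <= K13_right v)%N by case: v => [[|[|[|[|]]]]].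
exists 5%N, K13_left, K13_right, (fun p => p \in [:: 1; 3; 5]%N).
split; first by case=> [[|[|[|[|]]]]].
split; first by case=> [[|[|[|[|]]]]].
exact: interval_rel_meets K13_le.
Qed.

Lemma K13_not_proper : ~ proper_interval_graph K13.
Proof.
case=> l [r [model l_r_proper]].
apply/negP: (proper_family_claw_free model.1 l_r_proper
  ord0 (@Ordinal 4 1 isT) (@Ordinal 4 2 isT) (@Ordinal 4 3 isT)).
by rewrite -!(interval_model_meets model).
Qed.

Definition K14_left (v : 'I_5) : nat := nth 0 [:: 0; 1; 3; 5; 7]%N v.
Definition K14_right (v : 'I_5) : nat := nth 0 [:: 8; 1; 3; 5; 7]%N v.
Definition K14 : rel 'I_5 := interval_rel K14_left K14_right.

Lemma K14_interval : interval_graph K14.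
Proof.
have K14_le v : (K14_left v <= K14_right v)%N by case: v => [[|[|[|[|[|]]]]]].
exact: nat_model_interval_graph (interval_rel_meets K14_le).
Qed.

Lemma K14_not_exactly_hittable : ~ exactly_hittable_interval_graph K14.
Proof.
case=> n [l [r [T [bounds [hit_once model]]]]].
have l_le_r v : (l v <= r v)%N by case/andP: (bounds v) => /andP[].
have K14_meets x y : x != y -> K14 x y = meets l r x y.
  move=> xy; apply/idP/idP => [/(model x y xy) | ]; first by rewrite nat_intervals_meetE.
  by rewrite -nat_intervals_meetE // => /(model x y xy).
suff : (#|[set~ ord0 : 'I_5]| <= 3)%N by rewrite cardsC1 card_ord.
apply: (exact_hitting_independent_neighbours_le3 hit_once l_le_r (c := ord0)).
  move=> a; rewrite !inE => a0; rewrite -K14_meets; last by rewrite eq_sym.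
  by move: a a0 => [[|[|[|[|[|]]]]]].
move=> a b; rewrite !inE => a0 b0 ab; rewrite -K14_meets //.
by case: a b a0 b0 ab => [[|[|[|[|[|a]]]]] ?] [[|[|[|[|[|b]]]]] ?].
Qed.

Theorem theorem6 :
  (* proper interval graphs are exactly hittable interval graphs *)
  (forall (V : finType) (e : rel V), simple_graph e ->
     proper_interval_graph e -> exactly_hittable_interval_graph e) /\
  (* ... strictly *)
  (exists (V : finType) (e : rel V), simple_graph e /\
     exactly_hittable_interval_graph e /\ ~ proper_interval_graph e) /\
  (* exactly hittable interval graphs are interval graphs *)
  (forall (V : finType) (e : rel V), simple_graph e ->
     exactly_hittable_interval_graph e -> interval_graph e) /\
  (* ... strictly *)
  (exists (V : finType) (e : rel V), simple_graph e /\
     interval_graph e /\ ~ exactly_hittable_interval_graph e).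
Proof.
split; first by move=> V e _; exact: proper_exactly_hittable.
split.
  exists _, K13; split; first exact: interval_rel_simple.
  by split; [exact: K13_exactly_hittable | exact: K13_not_proper].
split; first by move=> V e _; exact: exactly_hittable_interval.
exists _, K14; split; first exact: interval_rel_simple.
by split; [exact: K14_interval | exact: K14_not_exactly_hittable].
Qed.
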